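(* If the equations $\frac{u(\mathfrak{z}_2)-u(\mathfrak{z}_1)}{u(\mathfrak{z}_3)-u(\mathfrak{z}_2)}=\frac{v(\mathfrak{z}_3)-v(\mathfrak{z}_2)}{v(\mathfrak{z}_1)-v(\mathfrak{z}_3)}$ hold on all positively oriented elementary triangles, then the constraints \[ \alpha u=k\frac{f_0g_0f_3}{f_0g_0+g_0f_3+f_3g_3}+\ell\frac{f_2g_2f_5}{f_2g_2+g_2f_5+f_5g_5}+m\frac{f_4g_4f_1}{f_4g_4+g_4f_1+f_1g_1}, \] \[ \beta v=k\frac{g_0f_3g_3}{f_0g_0+g_0f_3+f_3g_3}+\ell\frac{g_2f_5g_5}{f_2g_2+g_2f_5+f_5g_5}+m\frac{g_4f_1g_1}{f_4g_4+g_4f_1+f_1g_1} \] (at every vertex) imply a similar equation for the field $w$ (vanishing at $\mathfrak{z}=0$): \begin{equation} \gamma w=k\frac{1}{f_0g_0+g_0f_3+f_3g_3}+\ell\frac{1}{f_2g_2+g_2f_5+f_5g_5}+m\frac{1}{f_4g_4+g_4f_1+f_1g_1}, \end{equation} where $\gamma=1-\alpha-\beta$.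
   Context: On the regular triangular lattice with vertices $\mathfrak{z}=k+\ell\omega+m\omega^2$ ($\omega=e^{2\pi i/3}$), $u,v$ are complex functions on vertices vanishing at $\mathfrak{z}=0$, and $w$ is the third field: $w(\mathfrak{z}_2)-w(\mathfrak{z}_1)=1/\big((u(\mathfrak{z}_2)-u(\mathfrak{z}_1))(v(\mathfrak{z}_2)-v(\mathfrak{z}_1))\big)$ for every positively oriented edge $(\mathfrak{z}_1,\mathfrak{z}_2)$ (i.e. $\mathfrak{z}_2-\mathfrak{z}_1\in\{1,\omega,\omega^2\}$), with $w(0)=0$. Positively oriented elementary triangles have consecutive vertices with differences in $\{1,\omega,\omega^2\}$. At a vertex $\mathfrak{z}$ with representative $(k,\ell,m)$, $u=u(\mathfrak{z})$, $v=v(\mathfrak{z})$, $w=w(\mathfrak{z})$, and for the edges $\mathfrak{e}_0=(\mathfrak{z},\mathfrak{z}+1)$, $\mathfrak{e}_2=(\mathfrak{z},\mathfrak{z}+\omega)$, $\mathfrak{e}_4=(\mathfrak{z},\mathfrak{z}+\omega^2)$, $\mathfrak{e}_1=(\mathfrak{z}-\omega^2,\mathfrak{z})$, $\mathfrak{e}_3=(\mathfrak{z}-1,\mathfrak{z})$, $\mathfrak{e}_5=(\mathfrak{z}-\omega,\mathfrak{z})$, $f_j$, $g_j$ are the increments of $u$, $v$ along $\mathfrak{e}_j$ (end minus start). $\alpha,\beta\in\mathbb C$. *)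

From HB Require Import structures.
From mathcomp Require Import all_boot all_order all_algebra.
From mathcomp Require Import complex.
From mathcomp Require Import reals.

Set Implicit Arguments.
Unset Strict Implicit.
Unset Printing Implicit Defensive.

Import Order.TTheory GRing.Theory Num.Theory.
Local Open Scope ring_scope.

(* Vertices of the regular triangular lattice.  Since 1 + w + w^2 = 0
   (w = exp(2 pi i/3)), every vertex z = k + l w + m w^2 is uniquely
   z = a + b w with a = k - m, b = l - m; we encode z by (a, b). *)
Definition vertex := (int * int)%type.

Definition vadd (z z' : vertex) : vertex := (z.1 + z'.1, z.2 + z'.2).
Definition vsub (z z' : vertex) : vertex := (z.1 - z'.1, z.2 - z'.2).

(* the vertex k + l w + m w^2 *)
Definition vtx (k l m : int) : vertex := (k - m, l - m).

(* the unit steps 1, w, w^2 (w^2 = -1 - w) *)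
Definition d1 : vertex := (1, 0).
Definition dw : vertex := (0, 1).
Definition dw2 : vertex := (-1, -1).

Definition posdir (d : vertex) : bool := [|| d == d1, d == dw | d == dw2].

Section Fields.
Variable R : realType.
Local Notation C := (R[i])%type.

(* increment of a field F along the edges e_0..e_5 at vertex z
   (end minus start) *)
Definition incr0 (F : vertex -> C) (z : vertex) := F (vadd z d1) - F z.
Definition incr2 (F : vertex -> C) (z : vertex) := F (vadd z dw) - F z.
Definition incr4 (F : vertex -> C) (z : vertex) := F (vadd z dw2) - F z.
Definition incr1 (F : vertex -> C) (z : vertex) := F z - F (vsub z dw2).
Definition incr3 (F : vertex -> C) (z : vertex) := F z - F (vsub z d1).
Definition incr5 (F : vertex -> C) (z : vertex) := F z - F (vsub z dw).

Definition den0 (u v : vertex -> C) z :=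
  incr0 u z * incr0 v z + incr0 v z * incr3 u z + incr3 u z * incr3 v z.
Definition den1 (u v : vertex -> C) z :=
  incr2 u z * incr2 v z + incr2 v z * incr5 u z + incr5 u z * incr5 v z.
Definition den2 (u v : vertex -> C) z :=
  incr4 u z * incr4 v z + incr4 v z * incr1 u z + incr1 u z * incr1 v z.
End Fields.

From HB Require Import structures.
From mathcomp Require Import all_boot all_order all_algebra.
From mathcomp Require Import complex.
From mathcomp Require Import reals.
From mathcomp Require Import ring.
Import Order.TTheory GRing.Theory Num.Theory.
Local Open Scope ring_scope.

Set Implicit Arguments.
Unset Strict Implicit.
Unset Printing Implicit Defensive.

(* Let A_e, B_e, C_e be the coefficients of the direction-e term in the
   constraints for u, v and w.  Along an edge z -> z + d with increments f, g
   of u, v, consider Y_e(x) = f g C_e(x) + A_e(x) / f + B_e(x) / g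
   (edge_pairing d e z x).  For e <> d the triangle equations on the four
   elementary triangles spanned by the edge and the direction e give
   Y_e(z) = Y_e(z + d), while Y_d = 1 at both ends.
   Passing from z to z + d raises the weight of direction d by one, so
   subtracting the constraints for u and v at the two ends yields
   f g (c' - c) = 1 - alpha - beta, where c, c' are the right-hand sides of the
   w-constraint; as w increases by 1/(f g), the defect gamma w - c is invariant
   under the three unit shifts of (k, l, m), and it vanishes at the origin. *)

Section PairingAlgebra.
Variable F : fieldType.

Definition triangle_rel (a1 a2 a3 b1 b2 b3 : F) :=
  (a2 - a1) * (b1 - b3) = (a3 - a2) * (b3 - b2).

Lemma triangle_relP a1 a2 a3 b1 b2 b3 : a3 - a2 != 0 -> b1 - b3 != 0 ->
  (a2 - a1) / (a3 - a2) = (b3 - b2) / (b1 - b3) -> triangle_rel a1 a2 a3 b1 b2 b3.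
Proof. by move=> ha hb /eqP; rewrite eqr_div // /triangle_rel => /eqP ->; apply: mulrC. Qed.

Lemma triangle_rel_rot a1 a2 a3 b1 b2 b3 :
  triangle_rel a1 a2 a3 b1 b2 b3 -> triangle_rel a2 a3 a1 b2 b3 b1.
Proof.
rewrite /triangle_rel => h; apply/eqP; rewrite -subr_eq0.
have -> : (a3 - a2) * (b2 - b1) - (a1 - a3) * (b1 - b3)
        = (a2 - a1) * (b1 - b3) - (a3 - a2) * (b3 - b2) by ring.
by rewrite h subrr.
Qed.

Lemma triangle_rel_solve a1 a2 a3 b1 b2 b3 : a1 - a3 != 0 ->
  triangle_rel a1 a2 a3 b1 b2 b3 -> b3 = ((a1 - a2) * b1 + (a2 - a3) * b2) / (a1 - a3).
Proof.
move=> ha h; apply: (mulIf ha); rewrite mulfVK //; apply/eqP; rewrite -subr_eq0.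
have -> : b3 * (a1 - a3) - ((a1 - a2) * b1 + (a2 - a3) * b2)
        = (a2 - a1) * (b1 - b3) - (a3 - a2) * (b3 - b2) by ring.
by rewrite h subrr.
Qed.

Definition star_den (fo go fi gi : F) := fo * go + go * fi + fi * gi.

Definition pairing (f g fo go fi gi : F) :=
  (f * g + fo * go * fi / f + go * fi * gi / g) / star_den fo go fi gi.

Lemma pairing_diag_out f g fi gi : f != 0 -> g != 0 -> star_den f g fi gi != 0 ->
  pairing f g f g fi gi = 1.
Proof. by rewrite /pairing /star_den => hf hg hP; field; rewrite hf hg hP. Qed.

Lemma pairing_diag_in f g fo go : f != 0 -> g != 0 -> star_den fo go f g != 0 ->
  pairing f g fo go f g = 1.
Proof. by rewrite /pairing /star_den => hf hg hP; field; rewrite hf hg hP. Qed.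

Lemma pairing_eq_of_triangles (u0 u1 up uq ur us v0 v1 vp vq vr vs : F) :
  u1 - u0 != 0 -> v1 - v0 != 0 ->
  u0 - up != 0 -> up - uq != 0 -> u0 - ur != 0 -> u1 - us != 0 ->
  star_den (uq - u0) (vq - v0) (u0 - ur) (v0 - vr) != 0 ->
  star_den (up - u1) (vp - v1) (u1 - us) (v1 - vs) != 0 ->
  triangle_rel u0 u1 up v0 v1 vp -> triangle_rel u0 uq up v0 vq vp ->
  triangle_rel ur u0 u1 vr v0 v1 -> triangle_rel ur us u1 vr vs v1 ->
  pairing (u1 - u0) (v1 - v0) (uq - u0) (vq - v0) (u0 - ur) (v0 - vr)
  = pairing (u1 - u0) (v1 - v0) (up - u1) (vp - v1) (u1 - us) (v1 - vs).
Proof.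
move=> hf hg hp hq hr hs hP hP' T1 T2 T3 T4.
(* Each relation is linear in one v-value; eliminate vp, vq, vr, vs. *)
have Evp := triangle_rel_solve hp T1.
have Evq := triangle_rel_solve hq (triangle_rel_rot (triangle_rel_rot T2)).
have Evr := triangle_rel_solve hr (triangle_rel_rot T3).
have Evs := triangle_rel_solve hs (triangle_rel_rot (triangle_rel_rot T4)).
rewrite /pairing; apply/eqP; rewrite eqr_div //; apply/eqP.
rewrite /star_den Evs Evq Evp Evr; field.
by rewrite hf hg hp hq hr hs.
Qed.

Lemma pairing_sum_solve (f g a b dA dB dC : F) : f != 0 -> g != 0 ->
  f * g * dC + dA / f + dB / g = 1 -> dA = a * f -> dB = b * g ->
  dC = (1 - a - b) / (f * g).
Proof.
move=> hf hg h eA eB; apply: (mulfI (mulf_neq0 hf hg)).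
have -> : f * g * dC = 1 - a - b by rewrite -h eA eB; field; rewrite hf hg.
by field; rewrite hf hg.
Qed.

End PairingAlgebra.

Lemma int_shift_const (T : Type) (h : int -> T) :
  (forall n, h (n + 1) = h n) -> forall n, h n = h 0.
Proof.
move=> hS; elim/int_rect => [//|n IH|n IH]; first by rewrite -addn1 PoszD hS.
by rewrite -IH -[in RHS](subrK 1 (- n%:Z)) hS -opprD addrC.
Qed.

Lemma vaddE (z d : vertex) : vadd z d = z + d. Proof. by []. Qed.
Lemma vsubE (z d : vertex) : vsub z d = z - d. Proof. by []. Qed.

Lemma vtx_shift k l m :
  [/\ vtx (k + 1) l m = vtx k l m + d1, vtx k (l + 1) m = vtx k l m + dw
    & vtx k l (m + 1) = vtx k l m + dw2].
Proof. by split; rewrite -vaddE /vtx /vadd /=; congr (_, _); ring. Qed.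

Section LatticeFields.
Variable F : fieldType.
Implicit Types (G : vertex -> F) (x z d e : vertex).

Definition out_incr G d z := G (vadd z d) - G z.
Definition in_incr G d z := G z - G (vsub z d).

Variables u v : vertex -> F.

Definition star_den_at d z :=
  star_den (out_incr u d z) (out_incr v d z) (in_incr u d z) (in_incr v d z).
Definition coef_u d z :=
  out_incr u d z * out_incr v d z * in_incr u d z / star_den_at d z.
Definition coef_v d z :=
  out_incr v d z * in_incr u d z * in_incr v d z / star_den_at d z.
Definition coef_w d z := (star_den_at d z)^-1.

Definition edge_pairing d e z x :=
  pairing (out_incr u d z) (out_incr v d z)
    (out_incr u e x) (out_incr v e x) (in_incr u e x) (in_incr v e x).

Hypothesis u_edge : forall z d, posdir d -> u (z + d) - u z != 0.
Hypothesis v_edge : forall z d, posdir d -> v (z + d) - v z != 0.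
Hypothesis den_neq0 : forall d z, posdir d -> star_den_at d z != 0.
Hypothesis triangle_eq : forall x d e, posdir d -> posdir e -> posdir (- (d + e)) ->
  (u (x + d) - u x) / (u (x + d + e) - u (x + d))
  = (v (x + d + e) - v (x + d)) / (v x - v (x + d + e)).

Lemma u_incr_neq0 x y : posdir (y - x) -> u y - u x != 0.
Proof. by move=> /(u_edge x); rewrite subrKC. Qed.

Lemma v_incr_neq0 x y : posdir (y - x) -> v y - v x != 0.
Proof. by move=> /(v_edge x); rewrite subrKC. Qed.

Lemma triangle_rel_at x d e : posdir d -> posdir e -> posdir (- (d + e)) ->
  triangle_rel (u x) (u (x + d)) (u (x + d + e)) (v x) (v (x + d)) (v (x + d + e)).
Proof.
move=> pd pe pde; apply: triangle_relP; last exact: triangle_eq.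
  exact: u_edge.
by apply: v_incr_neq0; rewrite -addrA opprD addNKr.
Qed.

Lemma edge_pairing_diag d z : posdir d -> edge_pairing d d z z = 1.
Proof.
by move=> pd; apply: pairing_diag_out; [exact: u_edge | exact: v_edge | exact: den_neq0].
Qed.

Lemma edge_pairing_shift d e z : posdir d -> posdir e ->
  edge_pairing d e z (z + d) = edge_pairing d e z z.
Proof.
move=> pd pe; have [<-|nde] := eqVneq d e.
  move: (den_neq0 (z + d) pd).
  rewrite edge_pairing_diag // /edge_pairing /star_den_at /in_incr vsubE addrK => hP.
  by apply: pairing_diag_in; [exact: u_edge | exact: v_edge | exact: hP].
have pde : posdir (- (d + e)).
  by move: pd pe nde; rewrite /posdir => /or3P[]/eqP-> /or3P[]/eqP->.
have ped : posdir (- (e + d)) by rewrite addrC.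
have T2 := triangle_rel_at z pe pd ped; rewrite (addrAC z e d) in T2.
have T3 := triangle_rel_at (z - e) pe pd ped; rewrite subrK in T3.
have T4 := triangle_rel_at (z - e) pd pe pde; rewrite (addrAC z (- e) d) subrK in T4.
symmetry; apply: pairing_eq_of_triangles (triangle_rel_at z pd pe pde) T2 T3 T4.
- exact: u_edge.
- exact: v_edge.
- by apply: u_incr_neq0; rewrite -addrA opprD addNKr.
- by apply: u_incr_neq0; rewrite (addrAC z d e) [z + e + d]addrC addrK.
- by apply: u_incr_neq0; rewrite opprB subrKC.
- by apply: u_incr_neq0; rewrite opprB subrKC.
- exact: den_neq0.
- exact: den_neq0.
Qed.

Definition comb (X : vertex -> vertex -> F) (k l m : int) z :=
  k%:~R * X d1 z + l%:~R * X dw z + m%:~R * X dw2 z.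

Lemma combB X k l m k' l' m' z :
  comb X k' l' m' z - comb X k l m z = comb X (k' - k) (l' - l) (m' - m) z.
Proof. by rewrite /comb !intrB; ring. Qed.

Lemma comb_pairing d k l m z x :
  out_incr u d z * out_incr v d z * comb coef_w k l m x
  + comb coef_u k l m x / out_incr u d z + comb coef_v k l m x / out_incr v d z
  = comb (fun e => edge_pairing d e z) k l m x.
Proof. by rewrite /comb /edge_pairing /pairing /coef_w /coef_u /coef_v /star_den_at; ring. Qed.

Variables (w : vertex -> F) (alpha beta : F).

Hypothesis w_edge : forall z d, posdir d ->
  w (z + d) - w z = ((u (z + d) - u z) * (v (z + d) - v z))^-1.
Hypothesis u_constraint : forall k l m,
  alpha * u (vtx k l m) = comb coef_u k l m (vtx k l m).
Hypothesis v_constraint : forall k l m,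
  beta * v (vtx k l m) = comb coef_v k l m (vtx k l m).

Definition w_defect k l m :=
  (1 - alpha - beta) * w (vtx k l m) - comb coef_w k l m (vtx k l m).

(* By edge_pairing_diag, the last hypothesis holds as soon as (k', l', m')
   is (k, l, m) plus the unit vector of the direction d. *)
Lemma w_defect_step d k l m k' l' m' : posdir d -> vtx k' l' m' = vtx k l m + d ->
  comb (fun e => edge_pairing d e (vtx k l m)) (k' - k) (l' - l) (m' - m) (vtx k l m) = 1 ->
  w_defect k' l' m' = w_defect k l m.
Proof.
move=> pd Ez Y1; rewrite /w_defect Ez.
set z := vtx k l m in Ez Y1 *.
have pairing_step : out_incr u d z * out_incr v d z
    * (comb coef_w k' l' m' (z + d) - comb coef_w k l m z)
  + (comb coef_u k' l' m' (z + d) - comb coef_u k l m z) / out_incr u d z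
  + (comb coef_v k' l' m' (z + d) - comb coef_v k l m z) / out_incr v d z = 1.
  rewrite -Y1 -combB.
  have -> : comb (fun e => edge_pairing d e z) k' l' m' z
          = comb (fun e => edge_pairing d e z) k' l' m' (z + d).
    by rewrite /comb !edge_pairing_shift.
  by rewrite -!comb_pairing; ring.
have alpha_step : comb coef_u k' l' m' (z + d) - comb coef_u k l m z = alpha * out_incr u d z.
  by rewrite -Ez -!u_constraint Ez mulrBr.
have beta_step : comb coef_v k' l' m' (z + d) - comb coef_v k l m z = beta * out_incr v d z.
  by rewrite -Ez -!v_constraint Ez mulrBr.
have := pairing_sum_solve (u_edge z pd) (v_edge z pd) pairing_step alpha_step beta_step.
rewrite -w_edge // => Ew; apply/eqP; rewrite -subr_eq0; apply/eqP.
transitivity ((1 - alpha - beta) * (w (z + d) - w z)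
  - (comb coef_w k' l' m' (z + d) - comb coef_w k l m z)); first by ring.
by rewrite Ew subrr.
Qed.

Lemma w_defect_shift k l m :
  [/\ w_defect (k + 1) l m = w_defect k l m, w_defect k (l + 1) m = w_defect k l m
    & w_defect k l (m + 1) = w_defect k l m].
Proof.
have [e1 e2 e3] := vtx_shift k l m.
split; [apply: w_defect_step e1 _ | apply: w_defect_step e2 _
       | apply: w_defect_step e3 _] => //;
  by rewrite /comb !subrr (addrC _ 1) addrK edge_pairing_diag //; ring.
Qed.

Hypothesis w0 : w (0, 0) = 0.

Lemma w_defect_eq0 k l m : w_defect k l m = 0.
Proof.
rewrite (@int_shift_const _ (fun n => w_defect n l m) _ k);
  last by move=> n; case: (w_defect_shift n l m).
rewrite (@int_shift_const _ (fun n => w_defect 0 n m) _ l);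
  last by move=> n; case: (w_defect_shift 0 n m).
rewrite (@int_shift_const _ (fun n => w_defect 0 0 n) _ m);
  last by move=> n; case: (w_defect_shift 0 0 n).
by rewrite /w_defect /comb w0 !mulr0z; ring.
Qed.

End LatticeFields.

Theorem proposition16 (R : realType) (u v w : vertex -> R[i]) (alpha beta : R[i]) :
  u (0, 0) = 0 -> v (0, 0) = 0 -> w (0, 0) = 0 ->
  (* well-definedness: increments along positively oriented edges are nonzero *)
  (forall z d, posdir d -> u (vadd z d) - u z != 0) ->
  (forall z d, posdir d -> v (vadd z d) - v z != 0) ->
  (* the third field w *)
  (forall z d, posdir d ->
     w (vadd z d) - w z = ((u (vadd z d) - u z) * (v (vadd z d) - v z))^-1) ->
  (* well-definedness of the fractions in the constraints *)
  (forall z, den0 u v z != 0) ->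
  (forall z, den1 u v z != 0) ->
  (forall z, den2 u v z != 0) ->
  (* the equations on positively oriented elementary triangles *)
  (forall z1 z2 z3, posdir (vsub z2 z1) -> posdir (vsub z3 z2) -> posdir (vsub z1 z3) ->
     (u z2 - u z1) / (u z3 - u z2) = (v z3 - v z2) / (v z1 - v z3)) ->
  (* the constraints for u and v at every vertex (any representative) *)
  (forall k l m : int, let z := vtx k l m in
     alpha * u z =
       k%:~R * (incr0 u z * incr0 v z * incr3 u z / den0 u v z)
     + l%:~R * (incr2 u z * incr2 v z * incr5 u z / den1 u v z)
     + m%:~R * (incr4 u z * incr4 v z * incr1 u z / den2 u v z)) ->
  (forall k l m : int, let z := vtx k l m in
     beta * v z =
       k%:~R * (incr0 v z * incr3 u z * incr3 v z / den0 u v z)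
     + l%:~R * (incr2 v z * incr5 u z * incr5 v z / den1 u v z)
     + m%:~R * (incr4 v z * incr1 u z * incr1 v z / den2 u v z)) ->
  forall k l m : int, let z := vtx k l m in
     (1 - alpha - beta) * w z =
       k%:~R / den0 u v z + l%:~R / den1 u v z + m%:~R / den2 u v z.
Proof.
move=> _ _ w0 u_edge v_edge w_edge den0_neq0 den1_neq0 den2_neq0 triangle u_eq v_eq k l m.
have den_neq0 d z : posdir d -> star_den_at u v d z != 0.
  by case/or3P=> /eqP->; [exact: den0_neq0 | exact: den1_neq0 | exact: den2_neq0].
have triangle_eq x d e : posdir d -> posdir e -> posdir (- (d + e)) ->
    (u (x + d) - u x) / (u (x + d + e) - u (x + d))
    = (v (x + d + e) - v (x + d)) / (v x - v (x + d + e)).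
  move=> pd pe pde; apply: triangle; rewrite !vsubE.
  - by rewrite addrC addKr.
  - by rewrite addrC addKr.
  - by rewrite -addrA opprD addNKr.
apply/eqP; rewrite -subr_eq0; apply/eqP.
exact: (w_defect_eq0 u_edge v_edge den_neq0 triangle_eq w_edge u_eq v_eq w0).
Qed.
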